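(* Let $r\ge 2$ be real, let $q$ be an $r$-mighty prime, and let $p_m$ be a prime with $p_m>q^2$. Let $n\in\mathbb{S}$ satisfy $$\sigma_{-r}(q)<\sigma_{-r}(n)<\sigma_{-r}(qp_m).$$ Then $q\mid n$ (i.e. $v_q(n)\ge1$), and $q$ is the smallest prime $p$ with $v_p(n)>0$.
   Context: $p_m$ denotes the $m$-th prime. A Steinitz number is a formal product $n=\prod_p p^{\alpha_p}$ over all primes with $\alpha_p\in\mathbb{Z}_{\ge0}\cup\{\infty\}$; $v_p(n)=\alpha_p$; $\mathbb{S}$ is the set of Steinitz numbers. For real $r>1$, $\sigma_{-r}$ is defined on $\mathbb{S}$ multiplicatively with $\sigma_{-r}(p^\alpha)=\sum_{i=0}^\alpha p^{-ri}$ for finite $\alpha$ and $\sigma_{-r}(p^\infty)=\frac1{1-p^{-r}}$ (on $\mathbb{N}$ this is $\sum_{d\mid n}d^{-r}$). Let $u_m(r)=\prod_{t=m+1}^\infty\frac1{1-p_t^{-r}}$. A prime $p_m$ is $r$-mighty if $1+p_m^{-r}>u_m(r)$. *)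

From Stdlib Require Import Reals ZArith Znumtheory Arith.
From Coquelicot Require Import Coquelicot.
Open Scope R_scope.

(* Exponents of a Steinitz number: Z_{>=0} \cup {infinity}. *)
Inductive extnat : Type := Fin (k : nat) | Inf.

(* A Steinitz number, given by its exponent at each prime p.
   Values at non-prime arguments are irrelevant (never used). *)
Definition Steinitz : Type := nat -> extnat.

Definition is_prime (p : nat) : Prop := prime (Z.of_nat p).

(* p-adic valuation of a natural number k (fuel = k suffices) *)
Fixpoint vp_aux (fuel p k : nat) : nat :=
  match fuel with
  | O => O
  | S f => if andb (andb (1 <? p)%nat (0 <? k)%nat) (k mod p =? 0)%nat
           then S (vp_aux f p (k / p)) else O
  end.
Definition vp (p k : nat) : nat := vp_aux k p k.

Definition steinitz_of_nat (k : nat) : Steinitz := fun p => Fin (vp p k).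

Definition sigma_pp (r : R) (p : nat) (a : extnat) : R :=
  match a with
  | Fin k => sum_f_R0 (fun i => Rpower (INR p) (- r * INR i)) k
  | Inf => / (1 - Rpower (INR p) (- r))
  end.

Fixpoint pprod (f : nat -> R) (N : nat) : R :=
  match N with
  | O => 1
  | S N' => pprod f N' * (if prime_dec (Z.of_nat N') then f N' else 1)
  end.

(* sigma_{-r}(n) = prod over all primes of sigma_{-r}(p^{v_p(n)}),
   the infinite product being the limit of its partial products. *)
Definition sigma_r (r : R) (n : Steinitz) : R :=
  real (Lim_seq (fun N => pprod (fun p => sigma_pp r p (n p)) N)).

(* u_m(r) with q = p_m : product over primes t > q of 1/(1 - t^{-r}) *)
Definition u_after (r : R) (q : nat) : R :=
  real (Lim_seq (fun N =>
    pprod (fun p => if (q <? p)%nat then / (1 - Rpower (INR p) (- r)) else 1) N)).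

Definition mighty (r : R) (q : nat) : Prop :=
  is_prime q /\ 1 + Rpower (INR q) (- r) > u_after r q.

From Stdlib Require Import Reals ZArith Znumtheory Arith Lia Lra.
From Coquelicot Require Import Coquelicot.
Open Scope R_scope.

(* Write t_p = p^(-r).  For r >= 2 each local factor sigma_(-r)(p^a) lies between 1 and
   1/(1 - t_p) <= p^2/(p^2 - 1), so the partial Euler products increase and stay below
   prod_(k >= 2) k^2/(k^2 - 1) = 2; hence sigma_(-r)(n) is the supremum of its partial
   products, dominates each local factor and is monotone in the factors.
   If a prime p < q divided n, then sigma_(-r)(n) >= 1 + t_p >= (1 + t_q)(1 + t_pm)
   = sigma_(-r)(q pm): indeed t_pm <= t_q^2 since pm > q^2, while t_p >= t_(q-1)
   exceeds t_q by the factor (q/(q-1))^r >= q/(q-1).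
   If no prime p <= q divided n, then sigma_(-r)(n) <= u(q) < 1 + t_q = sigma_(-r)(q)
   because q is mighty. *)

Definition inv_rpow (r : R) (p : nat) : R := Rpower (INR p) (- r).

Lemma INR_ge2 (p : nat) : (2 <= p)%nat -> 2 <= INR p.
Proof. intros Hp. apply le_INR in Hp. simpl in Hp. lra. Qed.

Lemma Rpower_le_nonpos (a b e : R) : 0 < a <= b -> e <= 0 -> Rpower b e <= Rpower a e.
Proof.
  intros Hab He. rewrite <- (Ropp_involutive e), (Rpower_Ropp b), (Rpower_Ropp a).
  apply Rinv_le_contravar; [unfold Rpower; apply exp_pos|].
  apply Rle_Rpower_l; lra.
Qed.

Lemma inv_rpow_pos (r : R) (p : nat) : 0 < inv_rpow r p.
Proof. apply exp_pos. Qed.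

Lemma inv_rpow_lt1 (r : R) (p : nat) : 0 < r -> (2 <= p)%nat -> inv_rpow r p < 1.
Proof.
  intros Hr Hp. pose proof (INR_ge2 p Hp). unfold inv_rpow.
  rewrite <- (Rpower_O (INR p)) by lra. apply Rpower_lt; lra.
Qed.

Lemma inv_rpow_le_inv_sq (r : R) (p : nat) :
  2 <= r -> (2 <= p)%nat -> inv_rpow r p <= / INR p ^ 2.
Proof.
  intros Hr Hp. pose proof (INR_ge2 p Hp). unfold inv_rpow.
  rewrite <- Rpower_pow, <- Rpower_Ropp by lra.
  apply Rle_Rpower; simpl; lra.
Qed.

Lemma inv_rpow_anti (r : R) (a b : nat) :
  0 <= r -> (1 <= a <= b)%nat -> inv_rpow r b <= inv_rpow r a.
Proof.
  intros Hr Hab. apply Rpower_le_nonpos; [|lra].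
  split; [apply lt_0_INR; lia | apply le_INR; lia].
Qed.

Lemma inv_rpow_mul (r : R) (a b : nat) : (1 <= a)%nat -> (1 <= b)%nat ->
  inv_rpow r (a * b) = inv_rpow r a * inv_rpow r b.
Proof.
  intros Ha Hb. unfold inv_rpow. rewrite mult_INR.
  symmetry. apply Rpower_mult_distr; apply lt_0_INR; lia.
Qed.

(* [p^(-r) * p = p^(1-r)] decreases in [p] when [r >= 1]. *)
Lemma inv_rpow_mul_pred (r : R) (q : nat) : 1 <= r -> (2 <= q)%nat ->
  inv_rpow r q * INR q <= inv_rpow r (q - 1) * INR (q - 1).
Proof.
  intros Hr Hq.
  assert (Hpos : forall k : nat, (1 <= k)%nat -> inv_rpow r k * INR k = Rpower (INR k) (1 - r)).
  { intros k Hk. assert (0 < INR k) by (apply lt_0_INR; lia).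
    unfold inv_rpow, Rminus. rewrite Rplus_comm, Rpower_plus, Rpower_1 by lra. ring. }
  rewrite !Hpos by lia. apply Rpower_le_nonpos; [|lra].
  split; [apply lt_0_INR; lia | apply le_INR; lia].
Qed.

Lemma one_plus_mul_le (Q x y z : R) :
  2 <= Q -> 0 < x -> x * (Q * Q) <= 1 -> 0 <= y <= x * x -> x * Q <= z * (Q - 1) ->
  (1 + x) * (1 + y) <= 1 + z.
Proof.
  intros HQ Hx HxQ Hy Hz.
  assert (Hsmall : x * (1 + x) * (Q - 1) <= 1).
  { assert (H4 : 4 * (Q - 1) <= Q * Q) by nra.
    assert (x * (4 * (Q - 1)) <= 1).
    { eapply Rle_trans; [|exact HxQ]. apply Rmult_le_compat_l; lra. }
    nra. }
  assert (Hy' : (y + x * y) * (Q - 1) <= x).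
  { assert ((y + x * y) * (Q - 1) <= x * x * (1 + x) * (Q - 1)).
    { apply Rmult_le_compat_r; nra. }
    nra. }
  assert (Hyz : y + x * y <= z - x) by (apply (Rmult_le_reg_r (Q - 1)); nra).
  nra.
Qed.

Lemma factor_prod_le_smaller_prime (r : R) (p q m : nat) :
  2 <= r -> (2 <= p)%nat -> (p < q)%nat -> (q * q <= m)%nat ->
  (1 + inv_rpow r q) * (1 + inv_rpow r m) <= 1 + inv_rpow r p.
Proof.
  intros Hr Hp Hpq Hm. pose proof (INR_ge2 q ltac:(lia)) as Hq2.
  apply (one_plus_mul_le (INR q)).
  - exact Hq2.
  - apply inv_rpow_pos.
  - pose proof (inv_rpow_le_inv_sq r q Hr ltac:(lia)) as Hle.
    replace 1 with (/ INR q ^ 2 * (INR q * INR q)) by (field; lra).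
    apply Rmult_le_compat_r; [nra | exact Hle].
  - split; [left; apply inv_rpow_pos|].
    rewrite <- inv_rpow_mul by lia. apply inv_rpow_anti; [lra | nia].
  - replace (INR q - 1) with (INR (q - 1)) by (rewrite minus_INR by lia; simpl; ring).
    eapply Rle_trans; [apply inv_rpow_mul_pred; [lra | lia]|].
    apply Rmult_le_compat_r; [apply pos_INR|]. apply inv_rpow_anti; [lra | lia].
Qed.

Lemma sum_geom_mono (t : R) (j k : nat) : 0 <= t -> (j <= k)%nat ->
  sum_f_R0 (fun i => t ^ i) j <= sum_f_R0 (fun i => t ^ i) k.
Proof.
  intros Ht Hjk. induction Hjk as [|k _ IH]; [lra|].
  simpl. pose proof (pow_le t (S k) Ht). simpl in *. lra.
Qed.

Lemma sum_geom_le (t : R) (k : nat) : 0 <= t < 1 ->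
  sum_f_R0 (fun i => t ^ i) k <= / (1 - t).
Proof.
  intros Ht. rewrite tech3 by lra. unfold Rdiv.
  rewrite <- (Rmult_1_l (/ (1 - t))) at 2.
  apply Rmult_le_compat_r; [left; apply Rinv_0_lt_compat; lra|].
  pose proof (pow_le t (S k) (proj1 Ht)). lra.
Qed.

Lemma sigma_pp_Fin (r : R) (p k : nat) :
  sigma_pp r p (Fin k) = sum_f_R0 (fun i => inv_rpow r p ^ i) k.
Proof.
  apply sum_eq. intros i _. unfold inv_rpow.
  rewrite <- Rpower_pow by apply exp_pos. symmetry. apply Rpower_mult.
Qed.

Lemma sigma_pp_0 (r : R) (p : nat) : sigma_pp r p (Fin 0) = 1.
Proof. rewrite sigma_pp_Fin. simpl. ring. Qed.

Lemma sigma_pp_1 (r : R) (p : nat) : sigma_pp r p (Fin 1) = 1 + inv_rpow r p.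
Proof. rewrite sigma_pp_Fin. simpl. ring. Qed.

Section SigmaPrimePower.

Variables (r : R) (p : nat).
Hypotheses (r_pos : 0 < r) (p_ge2 : (2 <= p)%nat).

Let t_bounds : 0 <= inv_rpow r p < 1.
Proof. split; [left; apply inv_rpow_pos | apply inv_rpow_lt1; assumption]. Qed.

Lemma sigma_pp_le (a : extnat) : sigma_pp r p a <= / (1 - inv_rpow r p).
Proof.
  destruct a as [k|]; [|apply Rle_refl].
  rewrite sigma_pp_Fin. apply sum_geom_le, t_bounds.
Qed.

Lemma sigma_pp_ge_1_plus (a : extnat) : a <> Fin 0 ->
  1 + inv_rpow r p <= sigma_pp r p a.
Proof.
  intros Ha. pose proof t_bounds. destruct a as [[|k]|].
  - contradiction.
  - rewrite <- sigma_pp_1, !sigma_pp_Fin. apply sum_geom_mono; [lra | lia].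
  - simpl. change (Rpower (INR p) (- r)) with (inv_rpow r p).
    rewrite <- (Rmult_1_l (/ _)).
    apply (Rmult_le_reg_r (1 - inv_rpow r p)); [lra|].
    rewrite Rmult_assoc, Rinv_l by lra. nra.
Qed.

Lemma sigma_pp_ge1 (a : extnat) : 1 <= sigma_pp r p a.
Proof.
  destruct a as [[|k]|]; [rewrite sigma_pp_0; lra| |];
    (eapply Rle_trans; [|apply sigma_pp_ge_1_plus; discriminate]);
    pose proof t_bounds; lra.
Qed.

Lemma sigma_pp_lt_1_plus (a : extnat) : sigma_pp r p a < 1 + inv_rpow r p -> a = Fin 0.
Proof.
  intros Hlt. destruct a as [[|k]|]; [reflexivity | |];
    exfalso; apply (Rlt_not_le _ _ Hlt), sigma_pp_ge_1_plus; discriminate.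
Qed.

End SigmaPrimePower.

Lemma is_prime_ge2 (p : nat) : is_prime p -> (2 <= p)%nat.
Proof. intros Hp. apply prime_ge_2 in Hp. lia. Qed.

Lemma vp_aux_nodiv (fuel p k : nat) : ~ Nat.divide p k -> vp_aux fuel p k = 0%nat.
Proof.
  intros Hpk. destruct fuel as [|fuel]; [reflexivity|]. simpl.
  replace (k mod p =? 0)%nat with false; [now rewrite Bool.andb_false_r|].
  symmetry. apply Nat.eqb_neq. now rewrite Nat.Lcm0.mod_divide.
Qed.

Lemma vp_nodiv (p k : nat) : ~ Nat.divide p k -> vp p k = 0%nat.
Proof. apply vp_aux_nodiv. Qed.

Lemma vp_mul_nodiv (p m : nat) : (1 < p)%nat -> (0 < m)%nat -> ~ Nat.divide p m ->
  vp p (p * m) = 1%nat.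
Proof.
  intros Hp Hm Hpm. unfold vp. destruct (p * m)%nat as [|fuel] eqn:E; [nia|].
  cbn [vp_aux]. rewrite <- E.
  replace (1 <? p)%nat with true by (symmetry; now apply Nat.ltb_lt).
  replace (0 <? p * m)%nat with true by (symmetry; apply Nat.ltb_lt; nia).
  rewrite Nat.mul_comm, Nat.Div0.mod_mul, Nat.div_mul by lia. simpl.
  now rewrite vp_aux_nodiv.
Qed.

Lemma Nat2Z_divide (p k : nat) : (0 < p)%nat ->
  Nat.divide p k <-> (Z.of_nat p | Z.of_nat k)%Z.
Proof.
  intros Hp. rewrite <- Nat.Lcm0.mod_divide, <- Z.mod_divide, <- Nat2Z.inj_mod by lia. lia.
Qed.

Lemma prime_divide_prime_eq (p q : nat) : is_prime p -> is_prime q -> Nat.divide p q -> p = q.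
Proof.
  intros Hp Hq Hpq. pose proof (is_prime_ge2 p Hp).
  apply Nat2Z.inj, prime_div_prime; [exact Hp | exact Hq | apply Nat2Z_divide; [lia | exact Hpq]].
Qed.

Lemma prime_not_divide_mul (p q m : nat) : is_prime p -> is_prime q -> is_prime m ->
  p <> q -> p <> m -> ~ Nat.divide p (q * m).
Proof.
  intros Hp Hq Hm Hpq Hpm Hd. pose proof (is_prime_ge2 p Hp).
  apply Nat2Z_divide in Hd; [|lia]. rewrite Nat2Z.inj_mul in Hd.
  destruct (prime_mult _ Hp _ _ Hd) as [Hdq|Hdm].
  - apply Hpq, Nat2Z.inj, prime_div_prime; assumption.
  - apply Hpm, Nat2Z.inj, prime_div_prime; assumption.
Qed.

Lemma pprod_S_prime (f : nat -> R) (p : nat) : is_prime p -> pprod f (S p) = pprod f p * f p.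
Proof. intros Hp. simpl. destruct (prime_dec (Z.of_nat p)); [reflexivity | contradiction]. Qed.

Lemma pprod_stable (f : nat -> R) (N0 N : nat) :
  (forall p, is_prime p -> (N0 <= p < N)%nat -> f p = 1) -> (N0 <= N)%nat ->
  pprod f N = pprod f N0.
Proof.
  intros Hf HN. induction HN as [|N HN IH]; [reflexivity|]. simpl.
  rewrite IH by (intros p Hp Hr; apply Hf; [exact Hp | lia]).
  destruct (prime_dec (Z.of_nat N)) as [Hp|]; [rewrite Hf by (exact Hp || lia)|]; ring.
Qed.

Section PrimeProducts.

Variable f : nat -> R.
Hypothesis f_ge1 : forall p, is_prime p -> 1 <= f p.

Lemma pprod_ge1 (N : nat) : 1 <= pprod f N.
Proof.
  induction N as [|N IH]; simpl; [lra|].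
  destruct (prime_dec (Z.of_nat N)) as [Hp|]; [|lra].
  pose proof (f_ge1 N Hp). nra.
Qed.

Lemma pprod_le_S (N : nat) : pprod f N <= pprod f (S N).
Proof.
  pose proof (pprod_ge1 N). simpl.
  destruct (prime_dec (Z.of_nat N)) as [Hp|]; [|lra].
  pose proof (f_ge1 N Hp). nra.
Qed.

Lemma pprod_mono (N M : nat) : (N <= M)%nat -> pprod f N <= pprod f M.
Proof.
  intros HNM. induction HNM as [|M _ IH]; [lra|].
  eapply Rle_trans; [exact IH | apply pprod_le_S].
Qed.

Lemma factor_le_pprod (p N : nat) : is_prime p -> (p < N)%nat -> f p <= pprod f N.
Proof.
  intros Hp HpN. eapply Rle_trans; [|apply (pprod_mono (S p)); lia].
  rewrite pprod_S_prime by exact Hp.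
  pose proof (pprod_ge1 p). pose proof (f_ge1 p Hp). nra.
Qed.

End PrimeProducts.

(* [p^2/(p^2-1)] is the Euler factor of [zeta(2)] at [p]; over all integers [k >= 2]
   these factors telescope to [2]. *)
Definition zeta2_dominated (f : nat -> R) : Prop :=
  forall p, is_prime p -> 1 <= f p <= INR p ^ 2 / (INR p ^ 2 - 1).

Lemma zeta2_factor_ge1 (k : nat) : (2 <= k)%nat -> 1 <= INR k ^ 2 / (INR k ^ 2 - 1).
Proof.
  intros Hk. pose proof (INR_ge2 k Hk).
  apply Rcomplements.Rle_div_r; nra.
Qed.

Lemma pprod_le (f g : nat -> R) (N : nat) : (forall p, is_prime p -> 1 <= f p <= g p) ->
  pprod f N <= pprod g N.
Proof.
  intros Hfg. induction N as [|N IH]; simpl; [lra|].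
  pose proof (pprod_ge1 f (fun p Hp => proj1 (Hfg p Hp)) N).
  destruct (prime_dec (Z.of_nat N)) as [Hp|]; [|lra].
  pose proof (Hfg N Hp). apply Rmult_le_compat; lra.
Qed.

Section ZetaDominated.

Variable f : nat -> R.
Hypothesis f_dom : zeta2_dominated f.

Let f_ge1 (p : nat) (Hp : is_prime p) : 1 <= f p := proj1 (f_dom p Hp).

Lemma pprod_le_telescope (N : nat) : pprod f (S (S N)) <= 2 * (INR N + 1) / (INR N + 2).
Proof.
  induction N as [|N IH].
  - simpl. destruct (prime_dec 0) as [H0|]; [apply prime_ge_2 in H0; lia|].
    destruct (prime_dec 1) as [H1|]; [apply prime_ge_2 in H1; lia|]. lra.
  - pose proof (pprod_ge1 f f_ge1 (S (S N))).
    pose proof (pos_INR N).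
    assert (Hfac : (if prime_dec (Z.of_nat (S (S N))) then f (S (S N)) else 1)
                   <= (INR N + 2) ^ 2 / ((INR N + 2) ^ 2 - 1)).
    { replace (INR N + 2) with (INR (S (S N))) by (rewrite !S_INR; ring).
      destruct (prime_dec (Z.of_nat (S (S N)))) as [Hp|].
      - apply (f_dom _ Hp).
      - apply zeta2_factor_ge1. lia. }
    change (pprod f (S (S (S N)))) with
      (pprod f (S (S N)) * (if prime_dec (Z.of_nat (S (S N))) then f (S (S N)) else 1)).
    eapply Rle_trans.
    + apply Rmult_le_compat; [lra | | exact IH | exact Hfac].
      destruct (prime_dec _) as [Hp|]; [pose proof (f_ge1 _ Hp)|]; lra.
    + rewrite S_INR. right. field. nra.
Qed.

Lemma pprod_le_2 (N : nat) : pprod f N <= 2.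
Proof.
  destruct N as [|[|N]].
  - simpl. lra.
  - simpl. destruct (prime_dec 0) as [H0|]; [apply prime_ge_2 in H0; lia|]. lra.
  - eapply Rle_trans; [apply pprod_le_telescope|]. pose proof (pos_INR N).
    apply Rcomplements.Rle_div_l; lra.
Qed.

Lemma pprod_cvg : is_lim_seq (pprod f) (real (Lim_seq (pprod f))).
Proof.
  apply Lim_seq_correct', (ex_finite_lim_seq_incr _ 2).
  - apply pprod_le_S, f_ge1.
  - apply pprod_le_2.
Qed.

Lemma pprod_le_lim (N : nat) : pprod f N <= real (Lim_seq (pprod f)).
Proof. apply is_lim_seq_incr_compare; [apply pprod_cvg | apply pprod_le_S, f_ge1]. Qed.

End ZetaDominated.

Lemma lim_pprod_le (f g : nat -> R) : zeta2_dominated f -> zeta2_dominated g ->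
  (forall p, is_prime p -> f p <= g p) ->
  real (Lim_seq (pprod f)) <= real (Lim_seq (pprod g)).
Proof.
  intros Hf Hg Hfg.
  apply (is_lim_seq_le (pprod f) (pprod g) (real (Lim_seq (pprod f))) (real (Lim_seq (pprod g)))).
  - intros N. apply pprod_le. intros p Hp. split; [apply Hf, Hp | apply Hfg, Hp].
  - apply pprod_cvg, Hf.
  - apply pprod_cvg, Hg.
Qed.

Lemma lim_pprod_stable (f : nat -> R) (N0 : nat) :
  (forall p, is_prime p -> (N0 <= p)%nat -> f p = 1) ->
  real (Lim_seq (pprod f)) = pprod f N0.
Proof.
  intros Hf. rewrite (Lim_seq_ext_loc _ (fun _ => pprod f N0)), Lim_seq_const; [reflexivity|].
  exists N0. intros N HN. apply pprod_stable; [intros p Hp Hr; apply Hf; [exact Hp | lia] | exact HN].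
Qed.

Lemma inv_one_minus_inv_rpow_le (r : R) (p : nat) : 2 <= r -> (2 <= p)%nat ->
  / (1 - inv_rpow r p) <= INR p ^ 2 / (INR p ^ 2 - 1).
Proof.
  intros Hr Hp. pose proof (INR_ge2 p Hp). pose proof (inv_rpow_le_inv_sq r p Hr Hp).
  replace (INR p ^ 2 / (INR p ^ 2 - 1)) with (/ (1 - / INR p ^ 2)) by (field; nra).
  apply Rinv_le_contravar; [|lra].
  assert (/ INR p ^ 2 < 1) by (rewrite <- Rinv_1; apply Rinv_lt_contravar; nra). lra.
Qed.

Lemma sigma_pp_zeta2_dominated (r : R) (n : Steinitz) : 2 <= r ->
  zeta2_dominated (fun p => sigma_pp r p (n p)).
Proof.
  intros Hr p Hp. pose proof (is_prime_ge2 p Hp). split.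
  - apply sigma_pp_ge1; [lra | lia].
  - eapply Rle_trans; [apply sigma_pp_le; [lra | lia]|].
    apply inv_one_minus_inv_rpow_le; assumption.
Qed.

Lemma sigma_pp_le_sigma_r (r : R) (n : Steinitz) (p : nat) : 2 <= r -> is_prime p ->
  sigma_pp r p (n p) <= sigma_r r n.
Proof.
  intros Hr Hp. pose proof (sigma_pp_zeta2_dominated r n Hr) as Hdom.
  eapply Rle_trans; [apply (factor_le_pprod _ (fun p Hp => proj1 (Hdom p Hp)) p (S p) Hp); lia|].
  apply pprod_le_lim, Hdom.
Qed.

Lemma sigma_r_le_u_after (r : R) (q : nat) (n : Steinitz) : 2 <= r ->
  (forall p, is_prime p -> (p <= q)%nat -> n p = Fin 0) -> sigma_r r n <= u_after r q.
Proof.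
  intros Hr Hn. apply lim_pprod_le; [apply sigma_pp_zeta2_dominated, Hr| |].
  - intros p Hp. pose proof (is_prime_ge2 p Hp). destruct (Nat.ltb_spec q p).
    + split; [exact (sigma_pp_ge1 r p ltac:(lra) ltac:(lia) Inf)|].
      apply inv_one_minus_inv_rpow_le; assumption.
    + split; [lra | apply zeta2_factor_ge1; assumption].
  - intros p Hp. pose proof (is_prime_ge2 p Hp). destruct (Nat.ltb_spec q p).
    + apply sigma_pp_le; [lra | lia].
    + rewrite Hn, sigma_pp_0 by assumption. lra.
Qed.

Lemma sigma_pp_vp_nodiv (r : R) (p k : nat) : ~ Nat.divide p k ->
  sigma_pp r p (Fin (vp p k)) = 1.
Proof. intros Hpk. rewrite vp_nodiv by exact Hpk. apply sigma_pp_0. Qed.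

Lemma sigma_pp_vp_mul_nodiv (r : R) (p m : nat) : (1 < p)%nat -> (0 < m)%nat ->
  ~ Nat.divide p m -> sigma_pp r p (Fin (vp p (p * m))) = 1 + inv_rpow r p.
Proof. intros Hp Hm Hpm. rewrite vp_mul_nodiv by assumption. apply sigma_pp_1. Qed.

Lemma sigma_r_prime (r : R) (q : nat) : is_prime q ->
  sigma_r r (steinitz_of_nat q) = 1 + inv_rpow r q.
Proof.
  intros Hq. pose proof (is_prime_ge2 q Hq).
  assert (Hother : forall p, is_prime p -> p <> q -> sigma_pp r p (Fin (vp p q)) = 1).
  { intros p Hp Hpq. apply sigma_pp_vp_nodiv. intros Hd.
    apply Hpq, prime_divide_prime_eq; assumption. }
  unfold sigma_r, steinitz_of_nat.
  rewrite (lim_pprod_stable _ (S q)) by (intros p Hp Hle; apply Hother; [exact Hp | lia]).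
  rewrite pprod_S_prime by exact Hq.
  rewrite (pprod_stable _ 0 q); [| intros p Hp Hr; apply Hother; [exact Hp | lia] | lia].
  replace (vp q q) with (vp q (q * 1)) by now rewrite Nat.mul_1_r.
  rewrite sigma_pp_vp_mul_nodiv; [simpl; ring | lia | lia |].
  intros Hd. apply Nat.divide_1_r in Hd. lia.
Qed.

Lemma sigma_r_prime_mul (r : R) (q m : nat) : is_prime q -> is_prime m -> (q < m)%nat ->
  sigma_r r (steinitz_of_nat (q * m)) = (1 + inv_rpow r q) * (1 + inv_rpow r m).
Proof.
  intros Hq Hm Hqm. pose proof (is_prime_ge2 q Hq).
  assert (Hother : forall p, is_prime p -> p <> q -> p <> m ->
                   sigma_pp r p (Fin (vp p (q * m))) = 1).
  { intros p Hp Hpq Hpm. apply sigma_pp_vp_nodiv, prime_not_divide_mul; assumption. }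
  assert (Hqm' : ~ Nat.divide q m).
  { intros Hd. apply prime_divide_prime_eq in Hd; [lia | assumption..]. }
  assert (Hmq : ~ Nat.divide m q).
  { intros Hd. apply prime_divide_prime_eq in Hd; [lia | assumption..]. }
  unfold sigma_r, steinitz_of_nat.
  rewrite (lim_pprod_stable _ (S m)) by (intros p Hp Hle; apply Hother; [exact Hp | lia | lia]).
  rewrite pprod_S_prime by exact Hm.
  rewrite (pprod_stable _ (S q) m); [| intros p Hp Hr; apply Hother; [exact Hp | lia | lia] | lia].
  rewrite pprod_S_prime by exact Hq.
  rewrite (pprod_stable _ 0 q); [| intros p Hp Hr; apply Hother; [exact Hp | lia | lia] | lia].
  replace (vp m (q * m)) with (vp m (m * q)) by now rewrite Nat.mul_comm.
  rewrite !sigma_pp_vp_mul_nodiv by (assumption || lia).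
  simpl. ring.
Qed.

Theorem mainTheorem5 (r : R) (q pm : nat) (n : Steinitz) :
  2 <= r ->
  mighty r q ->
  is_prime pm ->
  (pm > q * q)%nat ->
  sigma_r r (steinitz_of_nat q) < sigma_r r n ->
  sigma_r r n < sigma_r r (steinitz_of_nat (q * pm)) ->
  n q <> Fin 0 /\
  (forall p : nat, is_prime p -> (p < q)%nat -> n p = Fin 0).
Proof.
  intros Hr [Hq Hmighty] Hpm Hpm_gt Hlo Hhi.
  pose proof (is_prime_ge2 q Hq).
  rewrite sigma_r_prime in Hlo by exact Hq.
  rewrite sigma_r_prime_mul in Hhi by (assumption || nia).
  assert (Hsmall : forall p, is_prime p -> (p < q)%nat -> n p = Fin 0).
  { intros p Hp Hpq. pose proof (is_prime_ge2 p Hp).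
    apply (sigma_pp_lt_1_plus r p); [lra | lia |].
    pose proof (sigma_pp_le_sigma_r r n p Hr Hp).
    pose proof (factor_prod_le_smaller_prime r p q pm Hr ltac:(lia) Hpq ltac:(lia)).
    lra. }
  split; [|exact Hsmall].
  intros Hnq.
  assert (sigma_r r n <= u_after r q).
  { apply sigma_r_le_u_after; [exact Hr|]. intros p Hp Hle.
    destruct (Nat.eq_dec p q) as [->|]; [exact Hnq | apply Hsmall; [exact Hp | lia]]. }
  unfold inv_rpow in Hlo. lra.
Qed.
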